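(* Let $r=\frac{e^2-1}{e^2+1}$, $\mathbb{D}_K(1)=\{|x|<r\}$, and let $\mathcal{F}$ be the Finsler metric on $\mathbb{D}_K(1)$ defined below. Let $d(x,y)=\inf_\sigma\int_a^b\mathcal{F}(\sigma(t),\dot\sigma(t))\,dt$, the infimum over all piecewise $C^1$ curves $\sigma:[a,b]\to\mathbb{D}_K(1)$ with $\sigma(a)=x$, $\sigma(b)=y$. Then for all $x\neq y$ in $\mathbb{D}_K(1)$, $$d(x,y)=\log\frac{\sinh d_K(x,\mathfrak{a})}{\sinh d_K(y,\mathfrak{a})},$$ where $\mathfrak{a}$ is the point where the Euclidean ray from $x$ through $y$ meets the circle $\{|z|=r\}$.
   Context: $d_K$ is the Klein distance on $\mathbb{D}_E(1)=\{|x|<1\}$: $d_K(x,y)=\tfrac12\log\frac{|x-a||y-b|}{|y-a||x-b|}$ for $x\neq y$, with $a$ (resp. $b$) the intersection of the Euclidean ray from $x$ through $y$ (resp. from $y$ through $x$) with the unit circle. $\alpha_K(x,\xi)=\frac{\sqrt{(1-|x|^2)|\xi|^2+\langle x,\xi\rangle^2}}{1-|x|^2}$. For $x\in\mathbb{D}_K(1)$, $\xi\neq0$: $\mathcal{F}(x,\xi)=\coth(d_K(x,\mathfrak{a}(x,\xi)))\,\alpha_K(x,\xi)$, where $\mathfrak{a}(x,\xi)$ is the unique $x+s\xi$, $s>0$, with $|x+s\xi|=r$; equivalently $\mathcal{F}(x,\xi)=\frac{\sqrt{(r^2-|x|^2)|\xi|^2+\langle x,\xi\rangle^2}}{r^2-|x|^2}+\frac{(1-r^2)\langle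 x,\xi\rangle}{(r^2-|x|^2)(1-|x|^2)}$. *)

From Stdlib Require Import Reals List ClassicalEpsilon.
From Coquelicot Require Import Coquelicot.
Open Scope R_scope.

Definition pt : Type := (R * R)%type.
Definition padd (p q : pt) : pt := (fst p + fst q, snd p + snd q).
Definition psub (p q : pt) : pt := (fst p - fst q, snd p - snd q).
Definition pscal (s : R) (p : pt) : pt := (s * fst p, s * snd p).
Definition pdot (p q : pt) : R := fst p * fst q + snd p * snd q.
Definition pnorm (p : pt) : R := sqrt (pdot p p).

Definition ray_hit (rho : R) (x v : pt) : pt :=
  epsilon (inhabits (0, 0))
    (fun p => exists s, 0 < s /\ p = padd x (pscal s v) /\ pnorm p = rho).

Definition dK (x y : pt) : R :=
  if excluded_middle_informative (x = y) then 0
  else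
    let a := ray_hit 1 x (psub y x) in
    let b := ray_hit 1 y (psub x y) in
    / 2 * ln ((pnorm (psub x a) * pnorm (psub y b)) /
              (pnorm (psub y a) * pnorm (psub x b))).

Definition alphaK (x xi : pt) : R :=
  sqrt ((1 - pnorm x ^ 2) * pnorm xi ^ 2 + pdot x xi ^ 2) / (1 - pnorm x ^ 2).

Definition rK : R := (exp 2 - 1) / (exp 2 + 1).

Definition coth (t : R) : R := cosh t / sinh t.

Definition FK (x xi : pt) : R :=
  if excluded_middle_informative (xi = (0, 0)) then 0
  else coth (dK x (ray_hit rK x xi)) * alphaK x xi.

Definition dcurve (g : R -> pt) (t : R) : pt :=
  (Derive (fun s => fst (g s)) t, Derive (fun s => snd (g s)) t).

Definition C1 (g : R -> pt) : Prop :=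
  forall t,
    ex_derive (fun s => fst (g s)) t /\ ex_derive (fun s => snd (g s)) t /\
    continuous (Derive (fun s => fst (g s))) t /\
    continuous (Derive (fun s => snd (g s))) t.

(* Partition t0 < t1 < ... with sigma agreeing on [t_i, t_{i+1}] with the
   C^1 function gs i. *)
Fixpoint pw_ok (sigma : R -> pt) (gs : nat -> R -> pt) (i : nat) (t0 : R)
  (ts : list R) : Prop :=
  match ts with
  | nil => True
  | t1 :: ts' =>
      t0 < t1 /\ C1 (gs i) /\ (forall t, t0 <= t <= t1 -> gs i t = sigma t) /\
      pw_ok sigma gs (S i) t1 ts'
  end.

Fixpoint pw_len (gs : nat -> R -> pt) (i : nat) (t0 : R) (ts : list R) : R :=
  match ts with
  | nil => 0
  | t1 :: ts' =>
      RInt (fun t => FK (gs i t) (dcurve (gs i) t)) t0 t1 + pw_len gs (S i) t1 ts'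
  end.

Definition curve_lengths (x y : pt) (L : R) : Prop :=
  exists (a b : R) (sigma : R -> pt) (ts : list R) (gs : nat -> R -> pt),
    ts <> nil /\ last ts a = b /\ pw_ok sigma gs 0 a ts /\
    sigma a = x /\ sigma b = y /\
    (forall t, a <= t <= b -> pnorm (sigma t) < rK) /\
    L = pw_len gs 0 a ts.

Definition is_inf (S : R -> Prop) (m : R) : Prop :=
  (forall l, S l -> m <= l) /\ (forall m', (forall l, S l -> m' <= l) -> m' <= m).

From Pilot Require Import Defs.
From Stdlib Require Import Reals Lra Psatz ClassicalEpsilon List FunctionalExtensionality.
From Coquelicot Require Import Coquelicot.
Open Scope R_scope.

(* For [a] on the circle [|a| = rK], the function
     calib a z = 1/2 ln (1 - |z|^2) - ln (rK^2 - <z, a>)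
   calibrates [F].  If [z + t xi] is the point where the ray from [z] in
   direction [xi] leaves the disc, the Klein-distance identities give
   [F(z, xi) = 1/t - <z, xi> / (1 - |z|^2)], and Cauchy-Schwarz
   [<z + t xi, a> <= rK^2] gives [d(calib a)_z (xi) <= F(z, xi)], with equality
   when that exit point is [a].  Hence every piecewise C^1 curve from [x] to [y]
   has length at least [calib a y - calib a x], and when [a] is the exit point
   of the ray from [x] through [y] the segment [x y] attains this bound.
   Finally [sinh^2 d_K(z, a) (1 - |z|^2) (1 - |a|^2)
   = <z, a - z>^2 + (1 - |z|^2) |a - z|^2] turns [calib a y - calib a x] into
   [ln (sinh d_K(x, a) / sinh d_K(y, a))] for [x], [y], [a] collinear. *)

Ltac pt_coords :=
  repeat match goal with p : pt |- _ => destruct p | p : (R * R)%type |- _ => destruct p end;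
  unfold pdot, padd, pscal, psub in *; cbn [fst snd] in *.

Lemma pdot_ge0 p : 0 <= pdot p p.
Proof. pt_coords; nra. Qed.

Lemma pdot_gt0 v : v <> (0, 0) -> 0 < pdot v v.
Proof.
  intro Hv; destruct (Rle_lt_dec (pdot v v) 0) as [Hle |]; [exfalso | assumption].
  apply Hv; pt_coords; f_equal; apply Rle_antisym; nra.
Qed.

Lemma pdot_0_r p : pdot p (0, 0) = 0.
Proof. pt_coords; ring. Qed.

Lemma pdot_Cauchy_Schwarz p q : pdot p q ^ 2 <= pdot p p * pdot q q.
Proof.
  pt_coords; match goal with |- context [(?a * ?b + ?c * ?d) ^ 2] =>
    assert (0 <= (a * d - c * b) ^ 2) by apply pow2_ge_0 end; nra.
Qed.

Lemma pdot_ray z v s :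
  pdot (padd z (pscal s v)) (padd z (pscal s v)) = pdot v v * s ^ 2 + 2 * pdot z v * s + pdot z z.
Proof. pt_coords; ring. Qed.

Lemma psub_neq0 a z : z <> a -> psub a z <> (0, 0).
Proof.
  intros Hza E; apply Hza; pt_coords; injection E; intros; f_equal; lra.
Qed.

Lemma pnorm_sq p : pnorm p ^ 2 = pdot p p.
Proof. unfold pnorm; rewrite pow2_sqrt; [reflexivity | apply pdot_ge0]. Qed.

Lemma pnorm_lt_iff p rho : 0 < rho -> pnorm p < rho <-> pdot p p < rho ^ 2.
Proof.
  intros Hrho; rewrite <- pnorm_sq.
  assert (0 <= pnorm p) by apply sqrt_pos; split; intro; nra.
Qed.

Lemma pnorm_eq_iff p rho : 0 <= rho -> pnorm p = rho <-> pdot p p = rho ^ 2.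
Proof.
  intros Hrho; split; intro H.
  - now rewrite <- pnorm_sq, H.
  - unfold pnorm; rewrite H; apply sqrt_lem_1; nra.
Qed.

Lemma pnorm_pscal c v : 0 <= c -> pnorm (pscal c v) = c * pnorm v.
Proof.
  intro Hc; unfold pnorm.
  replace (pdot (pscal c v) (pscal c v)) with (c * c * pdot v v) by (pt_coords; ring).
  rewrite sqrt_mult, sqrt_square by (nra || apply pdot_ge0); reflexivity.
Qed.

Lemma pnorm_psub_sym a z : pnorm (psub z a) = pnorm (psub a z).
Proof. unfold pnorm; f_equal; pt_coords; ring. Qed.

Lemma pdot_lt_sphere rho z a : pdot z z < rho ^ 2 -> pdot a a = rho ^ 2 -> pdot z a < rho ^ 2.
Proof.
  intros Hz Ha; assert (H := pdot_Cauchy_Schwarz z a); rewrite Ha in H.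
  assert (0 <= pdot z z) by apply pdot_ge0; nra.
Qed.

Lemma quad_pos_root V p C : 0 < V -> 0 < C ->
  let s := (sqrt (p ^ 2 + V * C) - p) / V in
  0 < s /\ V * s ^ 2 + 2 * p * s - C = 0 /\ / s = (sqrt (p ^ 2 + V * C) + p) / C.
Proof.
  intros HV HC s; unfold s; set (S := sqrt (p ^ 2 + V * C)).
  assert (HS2 : S * S = p ^ 2 + V * C) by (apply sqrt_sqrt; nra).
  assert (0 <= S) by apply sqrt_pos.
  assert (Hp : p < S) by nra; assert (Hm : - p < S) by nra.
  split; [|split].
  - apply Rdiv_lt_0_compat; lra.
  - replace (V * ((S - p) / V) ^ 2 + 2 * p * ((S - p) / V) - C)
      with ((S * S - p ^ 2 - V * C) / V) by (field; lra).
    rewrite HS2; field; lra.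
  - apply (Rmult_eq_reg_r ((S - p) / V * C)); [| apply Rmult_integral_contrapositive;
      split; [apply Rgt_not_eq, Rdiv_lt_0_compat |]; lra].
    replace (/ ((S - p) / V) * ((S - p) / V * C)) with C by (field; lra).
    replace ((S + p) / C * ((S - p) / V * C)) with ((S * S - p ^ 2) / V) by (field; lra).
    rewrite HS2; field; lra.
Qed.

(* Vieta: two distinct roots would have product [- C / V < 0]. *)
Lemma quad_pos_root_unique V p C s1 s2 : 0 < V -> 0 < C -> 0 < s1 -> 0 < s2 ->
  V * s1 ^ 2 + 2 * p * s1 - C = 0 -> V * s2 ^ 2 + 2 * p * s2 - C = 0 -> s1 = s2.
Proof.
  intros HV HC H1 H2 E1 E2.
  destruct (Req_dec s1 s2) as [| Hne]; [assumption | exfalso].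
  assert (Hsum : V * (s1 + s2) + 2 * p = 0).
  { assert (H : (s1 - s2) * (V * (s1 + s2) + 2 * p) = 0) by nra.
    apply Rmult_integral in H; destruct H; [lra | assumption]. }
  assert (0 < V * s1 * s2) by (apply Rmult_lt_0_compat; [apply Rmult_lt_0_compat |]; lra).
  nra.
Qed.

(* [W s^2 + 2 q s + P0 - R0] is negative at [s = 0] and [s = 1] and convex. *)
Lemma quad_root_gt1 P0 R0 q W s : 0 < s -> 0 < W -> P0 < R0 -> P0 + 2 * q + W < R0 ->
  W * s ^ 2 + 2 * q * s + P0 - R0 = 0 -> 1 < s.
Proof.
  intros Hs HW H0 H1 E.
  destruct (Rlt_le_dec 1 s) as [| Hle]; [assumption | exfalso].
  assert (W * s ^ 2 + 2 * q * s + P0 - R0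
          = (1 - s) * (P0 - R0) + s * (P0 + 2 * q + W - R0) + s * (s - 1) * W) by ring.
  assert ((1 - s) * (P0 - R0) <= 0) by nra.
  assert (s * (P0 + 2 * q + W - R0) < 0) by nra.
  assert (s * (s - 1) <= 0) by nra.
  assert (s * (s - 1) * W <= 0) by nra.
  lra.
Qed.

Definition exit_time (rho : R) (z v : pt) : R :=
  (sqrt (pdot z v ^ 2 + pdot v v * (rho ^ 2 - pdot z z)) - pdot z v) / pdot v v.

Lemma exit_time_spec rho z v : 0 < rho -> pdot z z < rho ^ 2 -> v <> (0, 0) ->
  0 < exit_time rho z v /\
  pdot (padd z (pscal (exit_time rho z v) v)) (padd z (pscal (exit_time rho z v) v)) = rho ^ 2 /\
  / exit_time rho z v
    = (pdot z v + sqrt (pdot z v ^ 2 + pdot v v * (rho ^ 2 - pdot z z))) / (rho ^ 2 - pdot z z).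
Proof.
  intros Hrho Hz Hv; assert (HV := pdot_gt0 v Hv).
  destruct (quad_pos_root (pdot v v) (pdot z v) (rho ^ 2 - pdot z z)) as (Hs & Heq & Hinv);
    [lra | lra |].
  rewrite (Rplus_comm _ (pdot z v)) in Hinv.
  unfold exit_time; rewrite pdot_ray; repeat split; [assumption | lra | assumption].
Qed.

Lemma exit_time_unique rho z v s : 0 < rho -> pdot z z < rho ^ 2 -> 0 < s ->
  pdot (padd z (pscal s v)) (padd z (pscal s v)) = rho ^ 2 -> s = exit_time rho z v.
Proof.
  intros Hrho Hz Hs Hn.
  assert (Hv : v <> (0, 0)).
  { intro E; subst v; replace (padd z (pscal s (0, 0))) with z in Hn by (pt_coords; f_equal; ring).
    lra. }
  rewrite pdot_ray in Hn.
  destruct (exit_time_spec rho z v Hrho Hz Hv) as (Ht & Htn & _); rewrite pdot_ray in Htn.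
  apply (quad_pos_root_unique (pdot v v) (pdot z v) (rho ^ 2 - pdot z z));
    [apply pdot_gt0, Hv | lra ..].
Qed.

Lemma ray_hit_exit rho z v : 0 < rho -> pdot z z < rho ^ 2 -> v <> (0, 0) ->
  ray_hit rho z v = padd z (pscal (exit_time rho z v) v).
Proof.
  intros Hrho Hz Hv; destruct (exit_time_spec rho z v Hrho Hz Hv) as (Ht & Htn & _).
  unfold ray_hit.
  match goal with |- epsilon ?i ?P = _ =>
    assert (HE : exists q, P q) by
      (eexists; exists (exit_time rho z v); split; [exact Ht | split; [reflexivity |]];
       apply pnorm_eq_iff; [lra | exact Htn]);
    destruct (epsilon_spec i P HE) as (s & Hs & -> & Hn) end.
  apply pnorm_eq_iff in Hn; [| lra].
  now rewrite <- (exit_time_unique rho z v s Hrho Hz Hs Hn).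
Qed.

Lemma exit_time_gt1 rho z v : 0 < rho -> pdot z z < rho ^ 2 -> v <> (0, 0) ->
  pdot (padd z v) (padd z v) < rho ^ 2 -> 1 < exit_time rho z v.
Proof.
  intros Hrho Hz Hv Hzv; destruct (exit_time_spec rho z v Hrho Hz Hv) as (Ht & Htn & _).
  replace (padd z v) with (padd z (pscal 1 v)) in Hzv by (pt_coords; f_equal; ring).
  rewrite pdot_ray in Hzv, Htn.
  apply (quad_root_gt1 (pdot z z) (rho ^ 2) (pdot z v) (pdot v v)); try lra.
  now apply pdot_gt0.
Qed.

(* [z + s (a - z)] and [z + u (a - z)] are the two points where the line
   through [z] and [a] meets the unit circle. *)
Lemma dK_cross_ratio z a : pdot z z < 1 -> pdot a a < 1 -> z <> a ->
  exists s u, 1 < s /\ u < 0 /\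
   pdot (psub a z) (psub a z) * s ^ 2 + 2 * pdot z (psub a z) * s + pdot z z - 1 = 0 /\
   pdot (psub a z) (psub a z) * u ^ 2 + 2 * pdot z (psub a z) * u + pdot z z - 1 = 0 /\
   dK z a = / 2 * ln (s * (1 - u) / ((s - 1) * - u)).
Proof.
  intros Hz Ha Hza; rewrite <- (pow1 2) in Hz, Ha.
  assert (Hw := psub_neq0 a z Hza).
  assert (Hw' : psub z a <> (0, 0)) by (apply psub_neq0; congruence).
  destruct (exit_time_spec 1 z (psub a z)) as (Hs & HnA & _); [lra | assumption | assumption |].
  destruct (exit_time_spec 1 a (psub z a)) as (Ht & HnB & _); [lra | assumption | assumption |].
  unfold dK; destruct (excluded_middle_informative (z = a)) as [| _]; [contradiction |]; cbv zeta.
  rewrite !ray_hit_exit by (assumption || lra).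
  set (s := exit_time 1 z (psub a z)) in *; set (t := exit_time 1 a (psub z a)) in *.
  assert (Hs1 : 1 < s).
  { apply exit_time_gt1; [lra | assumption | assumption |].
    now replace (padd z (psub a z)) with a by (pt_coords; f_equal; ring). }
  assert (Ht1 : 1 < t).
  { apply exit_time_gt1; [lra | assumption | assumption |].
    now replace (padd a (psub z a)) with z by (pt_coords; f_equal; ring). }
  rewrite pdot_ray in HnA, HnB.
  assert (Es : pdot (psub a z) (psub a z) * s ^ 2 + 2 * pdot z (psub a z) * s + pdot z z - 1 = 0)
    by lra.
  assert (Et : pdot (psub a z) (psub a z) * (1 - t) ^ 2 + 2 * pdot z (psub a z) * (1 - t)
               + pdot z z - 1 = 0).
  { revert HnB; clear; pt_coords; intro; nra. }
  exists s, (1 - t); repeat split; try lra; try assumption.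
  replace (psub z (padd z (pscal s (psub a z)))) with (pscal s (psub z a))
    by (pt_coords; f_equal; ring).
  replace (psub a (padd a (pscal t (psub z a)))) with (pscal t (psub a z))
    by (pt_coords; f_equal; ring).
  replace (psub a (padd z (pscal s (psub a z)))) with (pscal (s - 1) (psub z a))
    by (pt_coords; f_equal; ring).
  replace (psub z (padd a (pscal t (psub z a)))) with (pscal (t - 1) (psub a z))
    by (pt_coords; f_equal; ring).
  rewrite !pnorm_pscal, pnorm_psub_sym by lra.
  assert (0 < pnorm (psub a z)) by (apply sqrt_lt_R0, pdot_gt0, Hw).
  do 2 f_equal; field; repeat split; lra.
Qed.

Lemma half_ln_hyperbolic Q : 1 < Q ->
  coth (/ 2 * ln Q) = (Q + 1) / (Q - 1) /\
  sinh (/ 2 * ln Q) ^ 2 = (Q - 2 + / Q) / 4 /\ 0 < sinh (/ 2 * ln Q).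
Proof.
  intro HQ; set (d := / 2 * ln Q).
  assert (HE : exp d * exp d = Q).
  { rewrite <- exp_plus; replace (d + d) with (ln Q) by (unfold d; field); apply exp_ln; lra. }
  assert (Hd : 0 < d).
  { assert (H : ln 1 < ln Q) by (apply ln_increasing; lra); rewrite ln_1 in H; unfold d; lra. }
  assert (1 < exp d) by (rewrite <- exp_0; apply exp_increasing, Hd).
  assert (/ exp d < 1) by (apply (Rmult_lt_reg_l (exp d)); [lra | rewrite Rinv_r; lra]).
  unfold coth, cosh, sinh; rewrite exp_Ropp, <- HE.
  repeat split; [field; repeat split; nra | field; lra | lra].
Qed.

(* With [W], [p], [Z] the coefficients of the line through [z] and [a]
   ([W = |a - z|^2], [p = <z, a - z>], [Z = |z|^2]) and [s], [u] its
   parameters on the unit circle, Vieta's formulas express the cross ratio. *)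
Lemma cross_ratio_identities W p Z s u : 0 < W -> 1 < s -> u < 0 ->
  W * s ^ 2 + 2 * p * s + Z - 1 = 0 -> W * u ^ 2 + 2 * p * u + Z - 1 = 0 ->
  let Q := s * (1 - u) / ((s - 1) * - u) in
  1 < Q /\
  sqrt (p ^ 2 + (1 - Z) * W) = W * (s - u) / 2 /\
  (Q + 1) / (Q - 1) * (W * (s - u) / 2) = 1 - Z - p /\
  (Q - 2 + / Q) / 4 * ((1 - Z) * (1 - (Z + 2 * p + W))) = p ^ 2 + (1 - Z) * W.
Proof.
  intros HW Hs Hu E1 E2 Q; unfold Q.
  assert (Hsum : W * (s + u) + 2 * p = 0).
  { assert (H : (s - u) * (W * (s + u) + 2 * p) = 0) by nra.
    apply Rmult_integral in H; destruct H; [lra | assumption]. }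
  replace p with (- W * (s + u) / 2) in * by lra.
  replace Z with (1 + W * s * u) by nra.
  repeat split.
  - replace (s * (1 - u) / ((s - 1) * - u)) with (1 + (s - u) / ((s - 1) * - u)) by (field; lra).
    assert (0 < (s - u) / ((s - 1) * - u)) by (apply Rdiv_lt_0_compat; nra); lra.
  - apply sqrt_lem_1; [| nra | field].
    replace ((- W * (s + u) / 2) ^ 2 + (1 - (1 + W * s * u)) * W) with ((W * (s - u) / 2) ^ 2)
      by field; nra.
  - field; repeat split; nra.
  - field; repeat split; nra.
Qed.

Lemma dK_hyperbolic z a : pdot z z < 1 -> pdot a a < 1 -> z <> a ->
  coth (dK z a) * sqrt (pdot z (psub a z) ^ 2 + (1 - pdot z z) * pdot (psub a z) (psub a z))
    = 1 - pdot z z - pdot z (psub a z) /\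
  sinh (dK z a) ^ 2 * ((1 - pdot z z) * (1 - pdot a a))
    = pdot z (psub a z) ^ 2 + (1 - pdot z z) * pdot (psub a z) (psub a z) /\
  0 < sinh (dK z a).
Proof.
  intros Hz Ha Hza.
  destruct (dK_cross_ratio z a Hz Ha Hza) as (s & u & Hs & Hu & E1 & E2 & ->).
  assert (HW : 0 < pdot (psub a z) (psub a z)) by (apply pdot_gt0, psub_neq0, Hza).
  replace (pdot a a) with (pdot z z + 2 * pdot z (psub a z) + pdot (psub a z) (psub a z))
    by (pt_coords; ring).
  destruct (cross_ratio_identities _ _ _ s u HW Hs Hu E1 E2) as (HQ & -> & Hc & Hsh).
  destruct (half_ln_hyperbolic _ HQ) as (-> & -> & Hpos).
  repeat split; assumption.
Qed.

Lemma rK_bounds : 0 < rK < 1.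
Proof.
  unfold rK; assert (1 < exp 2) by (rewrite <- exp_0; apply exp_increasing; lra).
  split; [apply Rdiv_lt_0_compat; lra |].
  apply (Rmult_lt_reg_r (exp 2 + 1)); [lra |]; field_simplify; lra.
Qed.

Lemma FK_zero z : FK z (0, 0) = 0.
Proof. unfold FK; now destruct (excluded_middle_informative _). Qed.

(* The coth factor of [F] cancels against [alphaK] by [dK_hyperbolic]. *)
Lemma FK_exit_time z xi : pdot z z < rK ^ 2 -> xi <> (0, 0) ->
  FK z xi = / exit_time rK z xi - pdot z xi / (1 - pdot z z).
Proof.
  intros Hz Hxi; destruct rK_bounds as [Hr0 Hr1]; assert (rK ^ 2 < 1) by nra.
  destruct (exit_time_spec rK z xi Hr0 Hz Hxi) as (Ht & Hn & _).
  unfold FK; destruct (excluded_middle_informative _) as [| _]; [contradiction |].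
  rewrite ray_hit_exit by assumption.
  set (t := exit_time rK z xi) in *; set (a := padd z (pscal t xi)) in *.
  assert (Hza : z <> a) by (intro E; rewrite <- E in Hn; lra).
  destruct (dK_hyperbolic z a) as (Hc & _); [nra | nra | assumption |].
  replace (psub a z) with (pscal t xi) in Hc by (unfold a; pt_coords; f_equal; ring).
  replace (pdot z (pscal t xi) ^ 2 + (1 - pdot z z) * pdot (pscal t xi) (pscal t xi))
    with (t * t * ((1 - pdot z z) * pdot xi xi + pdot z xi ^ 2)) in Hc by (pt_coords; ring).
  replace (pdot z (pscal t xi)) with (t * pdot z xi) in Hc by (pt_coords; ring).
  assert (0 <= (1 - pdot z z) * pdot xi xi + pdot z xi ^ 2)
    by (assert (0 <= pdot xi xi) by apply pdot_ge0; nra).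
  rewrite sqrt_mult, sqrt_square in Hc by nra.
  unfold alphaK; rewrite !pnorm_sq.
  set (S := sqrt ((1 - pdot z z) * pdot xi xi + pdot z xi ^ 2)) in *.
  replace (coth (dK z a) * (S / (1 - pdot z z)))
    with (coth (dK z a) * (t * S) / (t * (1 - pdot z z))) by (field; nra).
  rewrite Hc; field; nra.
Qed.

(* A form of [F] free of [ray_hit] and [dK], hence visibly continuous. *)
Definition FK_explicit (z xi : pt) : R :=
  (pdot z xi + sqrt (pdot z xi ^ 2 + pdot xi xi * (rK ^ 2 - pdot z z))) / (rK ^ 2 - pdot z z)
  - pdot z xi / (1 - pdot z z).

Lemma FK_explicitE z xi : pdot z z < rK ^ 2 -> FK z xi = FK_explicit z xi.
Proof.
  intro Hz; destruct rK_bounds as [Hr0 Hr1]; unfold FK_explicit.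
  destruct (excluded_middle_informative (xi = (0, 0))) as [-> | Hxi].
  - rewrite FK_zero, !pdot_0_r.
    replace (0 ^ 2 + 0 * (rK ^ 2 - pdot z z)) with 0 by ring.
    rewrite sqrt_0; field; split; nra.
  - rewrite FK_exit_time by assumption.
    destruct (exit_time_spec rK z xi Hr0 Hz Hxi) as (_ & _ & ->); reflexivity.
Qed.

(* For [a] on the circle [|a| = rK], [calib a] is a calibration of [F]: its
   differential [calib_diff a] is dominated by [F] and agrees with it along
   rays ending at [a]. *)
Definition calib (a z : pt) : R := - ln (rK ^ 2 - pdot z a) + / 2 * ln (1 - pdot z z).

Definition calib_diff (a z xi : pt) : R :=
  pdot a xi / (rK ^ 2 - pdot z a) - pdot z xi / (1 - pdot z z).

Lemma calib_diff_le_FK a z xi : pdot z z < rK ^ 2 -> pdot a a = rK ^ 2 ->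
  calib_diff a z xi <= FK z xi.
Proof.
  intros Hz Ha; destruct rK_bounds as [Hr0 Hr1].
  assert (HD := pdot_lt_sphere rK z a Hz Ha).
  unfold calib_diff; destruct (excluded_middle_informative (xi = (0, 0))) as [-> | Hxi].
  - rewrite FK_zero, !pdot_0_r; unfold Rdiv; lra.
  - rewrite FK_exit_time by assumption.
    destruct (exit_time_spec rK z xi Hr0 Hz Hxi) as (Ht & Hn & _).
    set (t := exit_time rK z xi) in *.
    (* the exit point [z + t xi] lies on the circle, so [<z + t xi, a> <= rK^2] *)
    assert (Hle : pdot z a + t * pdot a xi <= rK ^ 2).
    { assert (H := pdot_Cauchy_Schwarz (padd z (pscal t xi)) a); rewrite Hn, Ha in H.
      replace (pdot (padd z (pscal t xi)) a) with (pdot z a + t * pdot a xi) in H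
        by (pt_coords; ring).
      nra. }
    enough (pdot a xi / (rK ^ 2 - pdot z a) <= / t) by lra.
    apply (Rmult_le_reg_r (t * (rK ^ 2 - pdot z a))); [apply Rmult_lt_0_compat; lra |].
    replace (pdot a xi / (rK ^ 2 - pdot z a) * (t * (rK ^ 2 - pdot z a))) with (t * pdot a xi)
      by (field; lra).
    replace (/ t * (t * (rK ^ 2 - pdot z a))) with (rK ^ 2 - pdot z a) by (field; lra).
    lra.
Qed.

Lemma calib_diff_eq_FK a z xi t : pdot z z < rK ^ 2 -> 0 < t -> a = padd z (pscal t xi) ->
  pdot a a = rK ^ 2 -> calib_diff a z xi = FK z xi.
Proof.
  intros Hz Ht Hae Ha; destruct rK_bounds as [Hr0 Hr1].
  assert (HD := pdot_lt_sphere rK z a Hz Ha).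
  assert (Hxi : xi <> (0, 0)).
  { intro E; subst xi a.
    replace (padd z (pscal t (0, 0))) with z in Ha by (pt_coords; f_equal; ring).
    lra. }
  rewrite FK_exit_time, <- (exit_time_unique rK z xi t) by (try rewrite <- Hae; assumption).
  assert (HDe : rK ^ 2 - pdot z a = t * pdot a xi) by (rewrite <- Ha, Hae; pt_coords; ring).
  unfold calib_diff; rewrite HDe.
  assert (pdot a xi <> 0) by (intro E; rewrite E in HDe; lra).
  field; split; [nra | lra].
Qed.

Ltac continuity_pt_arith :=
  repeat match goal with
  | |- continuity_pt (fun _ => ?c) _ => apply continuity_pt_const; intros ? ?; reflexivity
  | |- continuity_pt (fun t => @?f t + @?g t) _ => apply (continuity_pt_plus f g)
  | |- continuity_pt (fun t => @?f t - @?g t) _ => apply (continuity_pt_minus f g)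
  | |- continuity_pt (fun t => @?f t * @?g t) _ => apply (continuity_pt_mult f g)
  | |- continuity_pt (fun t => @?f t / @?g t) _ => apply (continuity_pt_div f g)
  | |- continuity_pt (fun t => @?f t ^ ?n) _ =>
      apply (continuity_pt_comp f (fun y => y ^ n));
        [| apply derivable_continuous_pt, derivable_pt_pow]
  | |- continuity_pt (fun t => sqrt (@?f t)) _ =>
      apply (continuity_pt_comp f sqrt); [| apply continuity_pt_sqrt]
  | |- _ => assumption
  end.

Lemma C1_continuity_pt g t : Defs.C1 g ->
  continuity_pt (fun s => fst (g s)) t /\ continuity_pt (fun s => snd (g s)) t /\
  continuity_pt (Derive (fun s => fst (g s))) t /\ continuity_pt (Derive (fun s => snd (g s))) t.
Proof.
  intro Hg; destruct (Hg t) as (H1 & H2 & H3 & H4).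
  repeat split; apply continuity_pt_filterlim;
    [exact (ex_derive_continuous _ _ H1) | exact (ex_derive_continuous _ _ H2) |
     exact H3 | exact H4].
Qed.

Lemma FK_explicit_continuity_pt g t : Defs.C1 g -> pdot (g t) (g t) < rK ^ 2 ->
  continuity_pt (fun s => FK_explicit (g s) (dcurve g s)) t.
Proof.
  intros Hg Hz; destruct rK_bounds as [Hr0 Hr1].
  assert (Hsq : 0 <= pdot (g t) (dcurve g t) ^ 2
                     + pdot (dcurve g t) (dcurve g t) * (rK ^ 2 - pdot (g t) (g t)))
    by (assert (0 <= pdot (dcurve g t) (dcurve g t)) by apply pdot_ge0; nra).
  destruct (C1_continuity_pt g t Hg) as (H1 & H2 & H3 & H4).
  unfold FK_explicit, pdot, dcurve in *; cbn [fst snd] in *.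
  continuity_pt_arith; (assumption || (intro; nra)).
Qed.

Lemma calib_diff_continuity_pt a g t : Defs.C1 g -> pdot (g t) (g t) < rK ^ 2 ->
  pdot a a = rK ^ 2 -> continuity_pt (fun s => calib_diff a (g s) (dcurve g s)) t.
Proof.
  intros Hg Hz Ha; destruct rK_bounds as [Hr0 Hr1].
  assert (HD := pdot_lt_sphere rK (g t) a Hz Ha).
  destruct (C1_continuity_pt g t Hg) as (H1 & H2 & H3 & H4).
  unfold calib_diff, pdot, dcurve in *; cbn [fst snd] in *.
  continuity_pt_arith; intro; nra.
Qed.

Lemma calib_coords_is_derive (g1 g2 : R -> R) a1 a2 c t : ex_derive g1 t -> ex_derive g2 t ->
  0 < c - (g1 t * a1 + g2 t * a2) -> 0 < 1 - (g1 t * g1 t + g2 t * g2 t) ->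
  is_derive
    (fun s => - ln (c - (g1 s * a1 + g2 s * a2)) + / 2 * ln (1 - (g1 s * g1 s + g2 s * g2 s))) t
    ((a1 * Derive g1 t + a2 * Derive g2 t) / (c - (g1 t * a1 + g2 t * a2))
     - (g1 t * Derive g1 t + g2 t * Derive g2 t) / (1 - (g1 t * g1 t + g2 t * g2 t))).
Proof.
  intros H1 H2 Hc Hz; auto_derive.
  - repeat split; auto; lra.
  - change (Derive (fun s => g1 s) t) with (Derive g1 t).
    change (Derive (fun s => g2 s) t) with (Derive g2 t).
    field; lra.
Qed.

Lemma calib_is_derive a g t : Defs.C1 g -> pdot (g t) (g t) < rK ^ 2 -> pdot a a = rK ^ 2 ->
  is_derive (fun s => calib a (g s)) t (calib_diff a (g t) (dcurve g t)).
Proof.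
  intros Hg Hz Ha; destruct rK_bounds as [Hr0 Hr1].
  assert (HD := pdot_lt_sphere rK (g t) a Hz Ha).
  destruct (Hg t) as (H1 & H2 & _).
  unfold calib, calib_diff, pdot, dcurve in *; cbn [fst snd] in *.
  apply (calib_coords_is_derive (fun s => fst (g s)) (fun s => snd (g s)));
    [exact H1 | exact H2 | lra | nra].
Qed.

Lemma calib_diff_is_RInt a g t0 t1 : Defs.C1 g -> t0 < t1 ->
  (forall t, t0 <= t <= t1 -> pdot (g t) (g t) < rK ^ 2) -> pdot a a = rK ^ 2 ->
  is_RInt (fun t => calib_diff a (g t) (dcurve g t)) t0 t1 (calib a (g t1) - calib a (g t0)).
Proof.
  intros Hg Ht Hdisc Ha.
  apply (is_RInt_derive (fun t => calib a (g t)));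
    rewrite Rmin_left, Rmax_right by lra; intros t Hti.
  - apply calib_is_derive; auto.
  - apply continuity_pt_filterlim, calib_diff_continuity_pt; auto.
Qed.

Lemma calib_le_RInt_FK a g t0 t1 : Defs.C1 g -> t0 < t1 ->
  (forall t, t0 <= t <= t1 -> pdot (g t) (g t) < rK ^ 2) -> pdot a a = rK ^ 2 ->
  calib a (g t1) - calib a (g t0) <= RInt (fun t => FK (g t) (dcurve g t)) t0 t1.
Proof.
  intros Hg Ht Hdisc Ha.
  assert (HI := calib_diff_is_RInt a g t0 t1 Hg Ht Hdisc Ha).
  rewrite <- (is_RInt_unique _ _ _ _ HI).
  rewrite (RInt_ext (fun t => FK (g t) (dcurve g t)) (fun t => FK_explicit (g t) (dcurve g t)))
    by (rewrite Rmin_left, Rmax_right by lra; intros; apply FK_explicitE, Hdisc; lra).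
  apply RInt_le; [lra | eexists; exact HI | |].
  - apply (@ex_RInt_continuous R_CompleteNormedModule); rewrite Rmin_left, Rmax_right by lra.
    intros t Hti; apply continuity_pt_filterlim, FK_explicit_continuity_pt; auto.
  - intros t Hti; rewrite <- FK_explicitE by (apply Hdisc; lra).
    apply calib_diff_le_FK; [apply Hdisc; lra | exact Ha].
Qed.

Lemma last_cons_default (t0 t1 : R) ts : last (t1 :: ts) t0 = last ts t1.
Proof.
  revert t0 t1; induction ts as [| t2 ts IH]; intros t0 t1; [reflexivity |].
  change (last (t2 :: ts) t0 = last (t2 :: ts) t1); now rewrite !IH.
Qed.

Lemma pw_ok_last_ge sigma gs i t0 ts : pw_ok sigma gs i t0 ts -> t0 <= last ts t0.
Proof.
  revert i t0; induction ts as [| t1 ts IH]; intros i t0 H; [apply Rle_refl |].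
  rewrite last_cons_default; destruct H as (H01 & _ & _ & Hrest).
  specialize (IH _ _ Hrest); lra.
Qed.

Lemma calib_le_pw_len a sigma gs i t0 ts : pdot a a = rK ^ 2 -> pw_ok sigma gs i t0 ts ->
  (forall t, t0 <= t <= last ts t0 -> pdot (sigma t) (sigma t) < rK ^ 2) ->
  calib a (sigma (last ts t0)) - calib a (sigma t0) <= pw_len gs i t0 ts.
Proof.
  intro Ha; revert i t0; induction ts as [| t1 ts IH]; intros i t0 Hok Hdisc; simpl pw_len.
  - simpl; lra.
  - rewrite last_cons_default in *; destruct Hok as (H01 & Hg & Hagree & Hrest).
    assert (Hlast := pw_ok_last_ge _ _ _ _ _ Hrest).
    assert (Hpiece := calib_le_RInt_FK a (gs i) t0 t1 Hg H01).
    rewrite (Hagree t1), (Hagree t0) in Hpiece by lra.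
    assert (calib a (sigma t1) - calib a (sigma t0)
            <= RInt (fun t => FK (gs i t) (dcurve (gs i) t)) t0 t1).
    { apply Hpiece; [| exact Ha]; intros t Ht; rewrite Hagree by lra; apply Hdisc; lra. }
    assert (calib a (sigma (last ts t1)) - calib a (sigma t1) <= pw_len gs (S i) t1 ts).
    { apply IH; [exact Hrest |]; intros t Ht; apply Hdisc; lra. }
    lra.
Qed.

Definition segment (x y : pt) (s : R) : pt := padd x (pscal s (psub y x)).

Lemma segment_0 x y : segment x y 0 = x.
Proof. unfold segment; pt_coords; f_equal; ring. Qed.

Lemma segment_1 x y : segment x y 1 = y.
Proof. unfold segment; pt_coords; f_equal; ring. Qed.

Lemma segment_derive_fst x y t : Derive (fun s => fst (segment x y s)) t = fst y - fst x.
Proof.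
  apply is_derive_unique; unfold segment, padd, pscal, psub; cbn [fst snd].
  auto_derive; [exact I | ring].
Qed.

Lemma segment_derive_snd x y t : Derive (fun s => snd (segment x y s)) t = snd y - snd x.
Proof.
  apply is_derive_unique; unfold segment, padd, pscal, psub; cbn [fst snd].
  auto_derive; [exact I | ring].
Qed.

Lemma dcurve_segment x y t : dcurve (segment x y) t = psub y x.
Proof. unfold dcurve; rewrite segment_derive_fst, segment_derive_snd; reflexivity. Qed.

Lemma segment_C1 x y : Defs.C1 (segment x y).
Proof.
  intro t; repeat split.
  - unfold segment, padd, pscal, psub; cbn [fst snd]; auto_derive; exact I.
  - unfold segment, padd, pscal, psub; cbn [fst snd]; auto_derive; exact I.
  - rewrite (functional_extensionality _ _ (segment_derive_fst x y)); apply continuous_const.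
  - rewrite (functional_extensionality _ _ (segment_derive_snd x y)); apply continuous_const.
Qed.

Lemma segment_in_disc rho x y t : pdot x x < rho ^ 2 -> pdot y y < rho ^ 2 -> 0 <= t <= 1 ->
  pdot (segment x y t) (segment x y t) < rho ^ 2.
Proof.
  intros Hx Hy Ht.
  assert (Hconv : (1 - t) * pdot x x + t * pdot y y - pdot (segment x y t) (segment x y t)
                  = t * (1 - t) * pdot (psub y x) (psub y x))
    by (unfold segment; pt_coords; ring).
  assert (0 <= pdot (psub y x) (psub y x)) by apply pdot_ge0.
  assert (0 <= t * (1 - t) * pdot (psub y x) (psub y x)) by (apply Rmult_le_pos; nra).
  assert (0 <= (1 - t) * (rho ^ 2 - pdot x x)) by nra.
  destruct (Rle_lt_dec t 0); [replace t with 0 in * by lra; lra |].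
  assert (0 < t * (rho ^ 2 - pdot y y)) by nra.
  lra.
Qed.

Lemma sinh_dK_sq_ratio x y a s0 : pdot x x < rK ^ 2 -> pdot y y < rK ^ 2 -> pdot a a = rK ^ 2 ->
  a = segment x y s0 ->
  (sinh (dK x a) / sinh (dK y a)) ^ 2
  = (1 - pdot y y) / (1 - pdot x x) * ((rK ^ 2 - pdot x a) / (rK ^ 2 - pdot y a)) ^ 2.
Proof.
  intros Hx Hy Ha Hae; destruct rK_bounds as [Hr0 Hr1]; assert (rK ^ 2 < 1) by nra.
  assert (Hxa : x <> a) by (intro E; rewrite <- E in Ha; lra).
  assert (Hya : y <> a) by (intro E; rewrite <- E in Ha; lra).
  destruct (dK_hyperbolic x a) as (_ & Hsx & Hsx0); [lra | lra | assumption |].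
  destruct (dK_hyperbolic y a) as (_ & Hsy & Hsy0); [lra | lra | assumption |].
  assert (HDx := pdot_lt_sphere rK x a Hx Ha); assert (HDy := pdot_lt_sphere rK y a Hy Ha).
  assert (Hcol : (pdot x (psub a x) ^ 2 + (1 - pdot x x) * pdot (psub a x) (psub a x))
                  * (rK ^ 2 - pdot y a) ^ 2
               = (pdot y (psub a y) ^ 2 + (1 - pdot y y) * pdot (psub a y) (psub a y))
                  * (rK ^ 2 - pdot x a) ^ 2)
    by (rewrite <- Ha, Hae; clear; unfold segment; pt_coords; ring).
  rewrite <- Hsx, <- Hsy in Hcol.
  set (sx := sinh (dK x a)) in *; set (sy := sinh (dK y a)) in *.
  set (Dx := rK ^ 2 - pdot x a) in *; set (Dy := rK ^ 2 - pdot y a) in *.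
  assert (Key : sx ^ 2 * (1 - pdot x x) * Dy ^ 2 = sy ^ 2 * (1 - pdot y y) * Dx ^ 2).
  { apply (Rmult_eq_reg_r (1 - pdot a a)); [| lra].
    transitivity (sx ^ 2 * ((1 - pdot x x) * (1 - pdot a a)) * Dy ^ 2); [ring |].
    rewrite Hcol; ring. }
  assert (0 < Dx) by (unfold Dx; lra); assert (0 < Dy) by (unfold Dy; lra).
  apply (Rmult_eq_reg_r (sy ^ 2 * (1 - pdot x x) * Dy ^ 2));
    [| apply Rgt_not_eq, Rmult_lt_0_compat; [apply Rmult_lt_0_compat |]; nra].
  replace ((sx / sy) ^ 2 * (sy ^ 2 * (1 - pdot x x) * Dy ^ 2))
    with (sx ^ 2 * (1 - pdot x x) * Dy ^ 2)
    by (field; lra).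
  rewrite Key; field; repeat split; lra.
Qed.

Lemma ln_sinh_dK_ratio x y a s0 : pdot x x < rK ^ 2 -> pdot y y < rK ^ 2 -> pdot a a = rK ^ 2 ->
  a = segment x y s0 -> ln (sinh (dK x a) / sinh (dK y a)) = calib a y - calib a x.
Proof.
  intros Hx Hy Ha Hae; destruct rK_bounds as [Hr0 Hr1]; assert (rK ^ 2 < 1) by nra.
  assert (HDx := pdot_lt_sphere rK x a Hx Ha); assert (HDy := pdot_lt_sphere rK y a Hy Ha).
  assert (Hsx : 0 < sinh (dK x a))
    by (apply (dK_hyperbolic x a); [lra | lra | intro E; rewrite <- E in Ha; lra]).
  assert (Hsy : 0 < sinh (dK y a))
    by (apply (dK_hyperbolic y a); [lra | lra | intro E; rewrite <- E in Ha; lra]).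
  assert (Hratio : 0 < sinh (dK x a) / sinh (dK y a)) by (apply Rdiv_lt_0_compat; assumption).
  assert (Hsq := f_equal ln (sinh_dK_sq_ratio x y a s0 Hx Hy Ha Hae)).
  unfold Rdiv in Hsq at 2 3; rewrite Rpow_mult_distr, pow_inv in Hsq.
  rewrite ln_pow, !ln_mult, !ln_Rinv, !ln_pow in Hsq
    by (assumption ||
        (repeat (apply Rmult_lt_0_compat || apply Rinv_0_lt_compat || apply pow_lt); lra)).
  unfold calib; simpl INR in Hsq; lra.
Qed.

Lemma curve_lengths_ge_calib x y a l : pdot a a = rK ^ 2 -> curve_lengths x y l ->
  calib a y - calib a x <= l.
Proof.
  intros Ha (t0 & t1 & sigma & ts & gs & _ & Hlast & Hok & Hx & Hy & Hdisc & ->).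
  destruct rK_bounds as [Hr0 _].
  rewrite <- Hx, <- Hy, <- Hlast; apply calib_le_pw_len; [exact Ha | exact Hok |].
  intros t Ht; apply pnorm_lt_iff, Hdisc; [exact Hr0 | rewrite Hlast in Ht; exact Ht].
Qed.

Lemma RInt_FK_segment x y s0 : pdot x x < rK ^ 2 -> pdot y y < rK ^ 2 -> 1 <= s0 ->
  pdot (segment x y s0) (segment x y s0) = rK ^ 2 ->
  RInt (fun t => FK (segment x y t) (dcurve (segment x y) t)) 0 1
  = calib (segment x y s0) y - calib (segment x y s0) x.
Proof.
  intros Hx Hy Hs0 Ha.
  assert (Hdisc : forall t, 0 <= t <= 1 -> pdot (segment x y t) (segment x y t) < rK ^ 2)
    by (intros; apply segment_in_disc; assumption).
  assert (HI := calib_diff_is_RInt (segment x y s0) (segment x y) 0 1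
                 (segment_C1 x y) Rlt_0_1 Hdisc Ha).
  rewrite segment_0, segment_1 in HI.
  rewrite <- (is_RInt_unique _ _ _ _ HI).
  apply RInt_ext; rewrite Rmin_left, Rmax_right by lra; intros t Ht.
  rewrite dcurve_segment; symmetry.
  apply (calib_diff_eq_FK _ _ _ (s0 - t)); [apply Hdisc; lra | lra | | exact Ha].
  unfold segment; pt_coords; f_equal; ring.
Qed.

Lemma segment_curve_length x y : pnorm x < rK -> pnorm y < rK ->
  curve_lengths x y (RInt (fun t => FK (segment x y t) (dcurve (segment x y) t)) 0 1).
Proof.
  intros Hx Hy; destruct rK_bounds as [Hr0 _].
  exists 0, 1, (segment x y), (1 :: nil), (fun _ => segment x y).
  split; [discriminate |]; split; [reflexivity |]; split.
  { split; [lra |]; split; [apply segment_C1 |]; split; [reflexivity | exact I]. }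
  split; [apply segment_0 |]; split; [apply segment_1 |]; split.
  - intros t Ht; apply pnorm_lt_iff; [exact Hr0 |].
    apply segment_in_disc; [apply pnorm_lt_iff .. | exact Ht]; assumption.
  - simpl; symmetry; apply Rplus_0_r.
Qed.

Theorem mainTheorem3 (x y : pt) :
  pnorm x < rK -> pnorm y < rK -> x <> y ->
  is_inf (curve_lengths x y)
    (ln (sinh (dK x (ray_hit rK x (psub y x))) /
         sinh (dK y (ray_hit rK x (psub y x))))).
Proof.
  intros Hx Hy Hxy; destruct rK_bounds as [Hr0 _].
  assert (Hxd : pdot x x < rK ^ 2) by now apply pnorm_lt_iff.
  assert (Hyd : pdot y y < rK ^ 2) by now apply pnorm_lt_iff.
  assert (Hv := psub_neq0 y x Hxy).
  set (s0 := exit_time rK x (psub y x)).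
  assert (Hs0 : 1 < s0).
  { apply exit_time_gt1; try assumption.
    now replace (padd x (psub y x)) with y by (pt_coords; f_equal; ring). }
  assert (Hae : ray_hit rK x (psub y x) = segment x y s0) by now apply ray_hit_exit.
  assert (Ha : pdot (segment x y s0) (segment x y s0) = rK ^ 2)
    by apply (exit_time_spec rK x (psub y x) Hr0 Hxd Hv).
  rewrite Hae, (ln_sinh_dK_ratio x y _ s0) by easy.
  split.
  - intros l; apply curve_lengths_ge_calib, Ha.
  - intros m Hm; rewrite <- (RInt_FK_segment x y s0) by (easy || lra).
    apply Hm, segment_curve_length; assumption.
Qed.
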